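(* Let $K\ge1$ and let $A_K,B_K,N_K$ be as defined in the context. Let $T_K=\{s\in S(\theta): \max N_K\le s<\max N_{K+1}\}$ and $T'_K=\{A_K+B_K\theta-s : s\in T_K\}$. Then $T'_K\subseteq S(\theta)$, and the set $C_K=T'_K\cup N_K\cup T_K$ is a block of consecutive terms of $S_\theta$ (i.e. $C_K=S(\theta)\cap[\min C_K,\max C_K]$) which is invariant under $s\mapsto A_K+B_K\theta-s$. In particular the sequence of consecutive differences of the elements of $C_K$ in increasing order is a palindrome.
   Context: Fix an irrational $\theta$ with $1<\theta<2$. Let $S(\theta)=\{i+j\theta : i,j\in\mathbb{N}_0\}$, and let $S_\theta$ be the sequence of its elements in increasing order. Every positive integer $K$ is either $K=\lfloor k\theta\rfloor+k$ or $K=\lfloor k/\theta\rfloor+k$ for a unique integer $k\ge1$ (and not both). In the first case set $(A_K,B_K)=(\lfloor k\theta\rfloor,k)$; in the second case set $(A_K,B_K)=(k,\lfloor k/\theta\rfloor)$. Define $N_K=\{s\in S(\theta): \min(A_K,B_K\theta)\le s\le \max(A_K,B_K\theta)\}$. *)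

From Stdlib Require Import Reals Lra Lia ZArith List Sorting.Sorted.
Import ListNotations.
Open Scope R_scope.

Definition irrational (x : R) : Prop :=
  forall p q : Z, (q <> 0)%Z -> x <> IZR p / IZR q.

(* floor: up x is the unique integer z with x < z <= x + 1 *)
Definition flr (x : R) : Z := (up x - 1)%Z.

Definition inS (theta s : R) : Prop :=
  exists i j : nat, s = INR i + INR j * theta.

Definition AB_spec (theta : R) (K a b : nat) : Prop :=
  (exists k : nat, (1 <= k)%nat /\
     Z.of_nat K = (flr (INR k * theta) + Z.of_nat k)%Z /\
     Z.of_nat a = flr (INR k * theta) /\ b = k)
  \/
  (exists k : nat, (1 <= k)%nat /\
     Z.of_nat K = (flr (INR k / theta) + Z.of_nat k)%Z /\
     a = k /\ Z.of_nat b = flr (INR k / theta)).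

Definition Nset (theta : R) (a b : nat) (s : R) : Prop :=
  inS theta s /\ Rmin (INR a) (INR b * theta) <= s <= Rmax (INR a) (INR b * theta).

(* max N_K ; both endpoints A_K and B_K theta lie in N_K, so this is its maximum *)
Definition maxN (theta : R) (a b : nat) : R := Rmax (INR a) (INR b * theta).

(* T_K, given (a,b) = (A_K,B_K) and (a',b') = (A_{K+1},B_{K+1}) *)
Definition Tset (theta : R) (a b a' b' : nat) (s : R) : Prop :=
  inS theta s /\ maxN theta a b <= s < maxN theta a' b'.

Definition refl (theta : R) (a b : nat) (s : R) : R := INR a + INR b * theta - s.

Definition Tpset (theta : R) (a b a' b' : nat) (s : R) : Prop :=
  exists t, Tset theta a b a' b' t /\ s = refl theta a b t.

Definition Cset (theta : R) (a b a' b' : nat) (s : R) : Prop :=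
  Tpset theta a b a' b' s \/ Nset theta a b s \/ Tset theta a b a' b' s.

Fixpoint diffs (l : list R) : list R :=
  match l with
  | x :: ((y :: _) as t) => (y - x) :: diffs t
  | _ => []
  end.

From Pilot Require Import Defs.
From Stdlib Require Import Reals RList Lra Lia ZArith List Sorting.Sorted.
Import ListNotations.
Open Scope R_scope.

(* Write c = A_K + B_K theta, M = max N_K and X = max N_{K+1}.
   From the definition of (A_K, B_K) one gets A_K + B_K = K together with
   A_K < (B_K + 1) theta and B_K theta < A_K + 1; consequently (A_{K+1}, B_{K+1})
   is (A_K + 1, B_K) or (A_K, B_K + 1), so M < X <= min (A_K + 1, (B_K + 1) theta).
   Every element i + j theta of S(theta) below X therefore has i <= A_K and
   j <= B_K, so its reflection c - s is again in S(theta).  Hence the "window"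
   S(theta) /\ (c - X, X) is invariant under s |-> c - s, and it is exactly
   C_K = T'_K u N_K u T_K.  The window is finite, so it has a largest element
   M0 and coincides with S(theta) /\ [c - M0, M0]: a block of consecutive terms.
   Finally, a strictly sorted list whose set of elements is invariant under
   x |-> c - x equals its own reflected reversal, so its list of consecutive
   differences is a palindrome. *)

Lemma flr_spec (x : R) : IZR (flr x) <= x < IZR (flr x) + 1.
Proof. unfold flr. destruct (archimed x). rewrite minus_IZR. simpl. lra. Qed.

Lemma AB_spec_balanced (theta : R) (K a b : nat) : 0 < theta ->
  AB_spec theta K a b ->
  K = (a + b)%nat /\ INR a < (INR b + 1) * theta /\ INR b * theta < INR a + 1.
Proof.
  intros Hth [[k [_ [HK [Ha ->]]]] | [k [_ [HK [-> Hb]]]]].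
  - split; [lia|].
    pose proof (flr_spec (INR k * theta)) as Hf.
    rewrite <- Ha, <- INR_IZR_INZ in Hf. lra.
  - split; [lia|].
    pose proof (flr_spec (INR k / theta)) as [Hf1 Hf2].
    rewrite <- Hb, <- INR_IZR_INZ in Hf1, Hf2.
    assert (Hk : INR k = INR k / theta * theta) by (field; lra).
    assert (INR b * theta <= INR k) by (rewrite Hk; apply Rmult_le_compat_r; lra).
    assert (INR k < (INR b + 1) * theta) by (rewrite Hk; apply Rmult_lt_compat_r; lra).
    lra.
Qed.

Lemma balanced_succ (theta : R) (a b a' b' : nat) : 0 < theta ->
  (a' + b' = S (a + b))%nat ->
  INR a < (INR b + 1) * theta -> INR b * theta < INR a + 1 ->
  INR a' < (INR b' + 1) * theta -> INR b' * theta < INR a' + 1 ->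
  (a' = S a /\ b' = b) \/ (a' = a /\ b' = S b).
Proof.
  intros Hth Hsum H1 H2 H3 H4.
  destruct (le_lt_dec (a + 2) a') as [Ha | Ha].
  { exfalso.
    assert (INR (a + 2) <= INR a') by (apply le_INR; lia).
    assert (INR (b' + 1) <= INR b) by (apply le_INR; lia).
    rewrite !plus_INR in *. simpl in *.
    assert ((INR b' + 1) * theta <= INR b * theta) by (apply Rmult_le_compat_r; lra).
    lra. }
  destruct (le_lt_dec (b + 2) b') as [Hb | Hb].
  { exfalso.
    assert (INR (b + 2) <= INR b') by (apply le_INR; lia).
    assert (INR (a' + 1) <= INR a) by (apply le_INR; lia).
    rewrite !plus_INR in *. simpl in *.
    assert ((INR b + 1 + 1) * theta <= INR b' * theta) by (apply Rmult_le_compat_r; lra).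
    lra. }
  lia.
Qed.

Lemma maxN_succ_bounds (theta : R) (K a b a' b' : nat) : 0 < theta ->
  AB_spec theta K a b -> AB_spec theta (S K) a' b' ->
  Defs.maxN theta a b < Defs.maxN theta a' b' /\
  Defs.maxN theta a' b' <= INR a + 1 /\ Defs.maxN theta a' b' <= (INR b + 1) * theta.
Proof.
  intros Hth HK HK'.
  destruct (AB_spec_balanced theta K a b Hth HK) as [-> [H1 H2]].
  destruct (AB_spec_balanced theta (S (a + b)) a' b' Hth HK') as [Hs [H3 H4]].
  unfold Defs.maxN, Rmax.
  destruct (balanced_succ theta a b a' b' Hth (eq_sym Hs) H1 H2 H3 H4)
    as [[-> ->] | [-> ->]]; rewrite ?S_INR in *; repeat destruct Rle_dec; lra.
Qed.

Lemma maxN_in_Nset (theta : R) (a b : nat) : Nset theta a b (Defs.maxN theta a b).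
Proof.
  unfold Nset, Defs.maxN, Rmin, Rmax.
  destruct Rle_dec; split; try lra; [exists 0%nat, b | exists a, 0%nat]; simpl; ring.
Qed.

Definition box_list (theta : R) (a b : nat) : list R :=
  flat_map (fun i => map (fun j => INR i + INR j * theta) (seq 0 (S b))) (seq 0 (S a)).

Lemma in_box_list (theta : R) (a b i j : nat) :
  (i <= a)%nat -> (j <= b)%nat -> In (INR i + INR j * theta) (box_list theta a b).
Proof.
  intros Hi Hj. apply in_flat_map. exists i. split; [apply in_seq; lia|].
  apply in_map_iff. exists j. split; [reflexivity | apply in_seq; lia].
Qed.

Lemma box_list_inS (theta : R) (a b : nat) (s : R) :
  In s (box_list theta a b) -> inS theta s.
Proof.
  intros Hs. apply in_flat_map in Hs as [i [_ Hs]].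
  apply in_map_iff in Hs as [j [<- _]]. exists i, j. reflexivity.
Qed.

Section Window.

Variables (theta : R) (a b : nat) (X : R).
Hypothesis theta_pos : 0 < theta.
Hypothesis X_le_a : X <= INR a + 1.
Hypothesis X_le_b : X <= (INR b + 1) * theta.

Lemma inS_below_box (s : R) : inS theta s -> s < X ->
  exists i j, (i <= a)%nat /\ (j <= b)%nat /\ s = INR i + INR j * theta.
Proof.
  intros [i [j ->]] Hs. exists i, j.
  assert (0 <= INR i) by apply pos_INR.
  assert (0 <= INR j * theta) by (apply Rmult_le_pos; [apply pos_INR | lra]).
  repeat split.
  - destruct (le_lt_dec i a) as [| Hi]; [assumption|].
    apply le_INR in Hi. rewrite S_INR in Hi. lra.
  - destruct (le_lt_dec j b) as [| Hj]; [assumption|].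
    apply le_INR in Hj. rewrite S_INR in Hj.
    assert ((INR b + 1) * theta <= INR j * theta) by (apply Rmult_le_compat_r; lra).
    lra.
Qed.

Lemma refl_inS_below (s : R) : inS theta s -> s < X -> inS theta (refl theta a b s).
Proof.
  intros Hs HsX. destruct (inS_below_box s Hs HsX) as [i [j [Hi [Hj ->]]]].
  exists (a - i)%nat, (b - j)%nat. unfold refl. rewrite !minus_INR by lia. ring.
Qed.

Definition window (s : R) : Prop := inS theta s /\ refl theta a b X < s < X.

Lemma window_refl (s : R) : window s -> window (refl theta a b s).
Proof.
  intros [Hs Hint]. split; [now apply refl_inS_below|]. unfold refl in *. lra.
Qed.

Lemma window_block : (exists s, window s) ->
  exists M0, window M0 /\
    forall s, window s <-> inS theta s /\ refl theta a b M0 <= s <= M0.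
Proof.
  intros [s0 Hs0].
  set (below := filter (fun x => if Rlt_dec x X then true else false) (box_list theta a b)).
  assert (Hbelow : forall s, In s below <-> inS theta s /\ s < X).
  { intros s. unfold below. rewrite filter_In. split.
    - intros [Hs HX]. destruct Rlt_dec; [|discriminate]. split; [|assumption].
      now apply box_list_inS in Hs.
    - intros [Hs HX]. destruct (inS_below_box s Hs HX) as [i [j [Hi [Hj ->]]]].
      split; [now apply in_box_list|]. destruct Rlt_dec; [reflexivity | lra]. }
  set (M0 := MaxRlist below).
  assert (Hmax : forall s, inS theta s -> s < X -> s <= M0)
    by (intros s Hs HX; apply MaxRlist_P1, Hbelow; auto).
  assert (HM0 : inS theta M0 /\ M0 < X).
  { apply Hbelow, MaxRlist_P2. exists s0. apply Hbelow. destruct Hs0; split; tauto. }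
  assert (Hs0M0 : s0 <= M0) by (destruct Hs0 as [? ?]; apply Hmax; tauto).
  assert (HwM0 : window M0) by (destruct Hs0; split; [tauto | lra]).
  exists M0. split; [assumption|].
  intros s. split.
  - intros Hs. destruct (window_refl s Hs) as [Hrs Hrint].
    destruct Hs as [Hs Hint].
    assert (s <= M0) by (apply Hmax; tauto).
    assert (refl theta a b s <= M0) by (apply Hmax; tauto).
    split; [assumption|]. unfold refl in *. lra.
  - intros [Hs Hint]. split; [assumption|].
    destruct HwM0 as [_ ?]. unfold refl in *. lra.
Qed.

End Window.

(* C_K is the window below max N_{K+1}: N_K is its middle part, T_K its upper
   part above max N_K, and T'_K the reflection of T_K, i.e. its lower part. *)
Lemma Cset_window (theta : R) (a b a' b' : nat) :
  0 < theta -> Defs.maxN theta a b < Defs.maxN theta a' b' ->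
  Defs.maxN theta a' b' <= INR a + 1 -> Defs.maxN theta a' b' <= (INR b + 1) * theta ->
  forall s, Cset theta a b a' b' s <-> window theta a b (Defs.maxN theta a' b') s.
Proof.
  intros Hth HMX HXa HXb s.
  assert (Hmin : Rmin (INR a) (INR b * theta) = refl theta a b (Defs.maxN theta a b))
    by (unfold refl, Defs.maxN, Rmin, Rmax; destruct Rle_dec; lra).
  assert (Hminmax : Rmin (INR a) (INR b * theta) <= Defs.maxN theta a b)
    by (unfold Defs.maxN, Rmin, Rmax; destruct Rle_dec; lra).
  unfold Cset, Tpset, Tset, Nset, window. rewrite Hmin in *. fold (Defs.maxN theta a b).
  split.
  - intros [[t [[Ht Htint] ->]] | [[Hs Hint] | [Hs Hint]]].
    + split; [now apply (refl_inS_below theta a b (Defs.maxN theta a' b')) | unfold refl in *; lra].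
    + split; [assumption | unfold refl in *; lra].
    + split; [assumption | unfold refl in *; lra].
  - intros [Hs Hint].
    destruct (Rle_dec (Defs.maxN theta a b) s); [right; right; split; [assumption | lra]|].
    destruct (Rle_dec (refl theta a b (Defs.maxN theta a b)) s);
      [right; left; split; [assumption | lra]|].
    left. exists (refl theta a b s).
    split; [|unfold refl; ring].
    split; [now apply (refl_inS_below theta a b (Defs.maxN theta a' b')) | unfold refl in *; lra].
Qed.

Lemma diffs_snoc2 (u : list R) (z y : R) :
  diffs (u ++ [z; y]) = diffs (u ++ [z]) ++ [y - z].
Proof.
  induction u as [| w [| v u] IH]; [reflexivity | reflexivity |].
  simpl in *. now rewrite IH.
Qed.

Lemma diffs_reflect (c : R) (l : list R) :
  diffs (map (fun x => c - x) (rev l)) = rev (diffs l).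
Proof.
  induction l as [| x [| y t] IH]; [reflexivity | reflexivity |].
  change (rev (x :: y :: t)) with ((rev t ++ [y]) ++ [x]).
  rewrite <- app_assoc, map_app. simpl map. rewrite diffs_snoc2.
  replace (map (fun x0 => c - x0) (rev t) ++ [c - y])
    with (map (fun x0 => c - x0) (rev (y :: t))) by (simpl; now rewrite map_app).
  rewrite IH.
  simpl rev. do 2 f_equal. ring.
Qed.

Lemma StronglySorted_snoc (l : list R) (y : R) :
  StronglySorted Rlt l -> (forall z, In z l -> z < y) -> StronglySorted Rlt (l ++ [y]).
Proof.
  induction l as [| x t IH]; intros Hl Hy; simpl; [repeat constructor|].
  inversion Hl; subst. constructor.
  - apply IH; [assumption | intros; apply Hy; now right].
  - apply Forall_app. split; [assumption | constructor; [apply Hy; now left | constructor]].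
Qed.

Lemma StronglySorted_reflect (c : R) (l : list R) :
  StronglySorted Rlt l -> StronglySorted Rlt (map (fun x => c - x) (rev l)).
Proof.
  induction l as [| x t IH]; intros Hl; simpl; [constructor|].
  inversion Hl as [| ? ? Ht Hx]; subst. rewrite map_app. apply StronglySorted_snoc; auto.
  intros z Hz. apply in_map_iff in Hz as [w [<- Hw]]. apply in_rev in Hw.
  rewrite Forall_forall in Hx. specialize (Hx w Hw). lra.
Qed.

Lemma StronglySorted_same_elements (l1 l2 : list R) :
  StronglySorted Rlt l1 -> StronglySorted Rlt l2 ->
  (forall x, In x l1 <-> In x l2) -> l1 = l2.
Proof.
  revert l2. induction l1 as [| x t IH]; intros [| y u] H1 H2 E.
  - reflexivity.
  - exfalso. apply (proj2 (E y)). now left.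
  - exfalso. apply (proj1 (E x)). now left.
  - inversion H1 as [| ? ? Ht Hx]; inversion H2 as [| ? ? Hu Hy]; subst.
    rewrite Forall_forall in Hx, Hy.
    assert (Exy : x = y).
    { destruct (proj1 (E x) (or_introl eq_refl)) as [| Hxu]; [auto|].
      destruct (proj2 (E y) (or_introl eq_refl)) as [| Hyt]; [auto|].
      specialize (Hy _ Hxu). specialize (Hx _ Hyt). lra. }
    subst y. f_equal. apply IH; [assumption | assumption|].
    intros z. split; intros Hz.
    + destruct (proj1 (E z) (or_intror Hz)) as [<- |]; [specialize (Hx _ Hz); lra | assumption].
    + destruct (proj2 (E z) (or_intror Hz)) as [<- |]; [specialize (Hy _ Hz); lra | assumption].
Qed.

Lemma symmetric_sorted_diffs_palindrome (c : R) (l : list R) :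
  Sorted Rlt l -> (forall x, In x l -> In (c - x) l) -> rev (diffs l) = diffs l.
Proof.
  intros Hl Hsym.
  apply Sorted_StronglySorted in Hl; [| exact Rlt_trans].
  assert (E : map (fun x => c - x) (rev l) = l).
  { apply StronglySorted_same_elements; [now apply StronglySorted_reflect | assumption |].
    intros x. rewrite in_map_iff. split.
    - intros [y [<- Hy]]. apply Hsym. now apply in_rev.
    - intros Hx. exists (c - x). split; [ring|]. rewrite <- in_rev. now apply Hsym. }
  rewrite <- E at 2. now rewrite diffs_reflect.
Qed.

Theorem lemma10 (theta : R) (K a b a' b' : nat) :
  irrational theta -> 1 < theta < 2 ->
  (1 <= K)%nat ->
  AB_spec theta K a b ->
  AB_spec theta (S K) a' b' ->
  (forall s, Tpset theta a b a' b' s -> inS theta s) /\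
  (exists m M, Cset theta a b a' b' m /\ Cset theta a b a' b' M /\
     forall s, Cset theta a b a' b' s <-> (inS theta s /\ m <= s <= M)) /\
  (forall s, Cset theta a b a' b' s -> Cset theta a b a' b' (refl theta a b s)) /\
  (forall l : list R, Sorted Rlt l ->
     (forall s, In s l <-> Cset theta a b a' b' s) ->
     rev (diffs l) = diffs l).
Proof.
  intros _ Htheta _ HK HK'.
  assert (Hth : 0 < theta) by lra.
  destruct (maxN_succ_bounds theta K a b a' b' Hth HK HK') as [HMX [HXa HXb]].
  pose proof (Cset_window theta a b a' b' Hth HMX HXa HXb) as HC.
  set (X := Defs.maxN theta a' b') in *.
  assert (Hinv : forall s, Cset theta a b a' b' s -> Cset theta a b a' b' (refl theta a b s))
    by (intros s; rewrite !HC; apply window_refl; assumption).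
  destruct (window_block theta a b X Hth HXa HXb) as [M0 [HM0 Hblock]].
  { exists (Defs.maxN theta a b). apply HC. right; left. apply maxN_in_Nset. }
  split; [|split; [|split]].
  - intros s Hs. exact (proj1 (proj1 (HC s) (or_introl Hs))).
  - exists (refl theta a b M0), M0.
    split; [apply Hinv, HC, HM0 | split; [apply HC, HM0|]].
    intros s. rewrite HC. apply Hblock.
  - exact Hinv.
  - intros l Hl Hmem. apply (symmetric_sorted_diffs_palindrome (INR a + INR b * theta));
      [assumption|].
    intros x Hx. apply Hmem, Hinv, Hmem, Hx.
Qed.
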